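(* Let $G$ be an amenable group with finitely additive left-invariant mean $\mu$, let $X\subset G$ be a symmetric subset containing the identity, and let $m\in\mathbb{N}$. Suppose $\mu(X)\ge\frac{1}{m}$. Then the subgroup $\langle X\rangle$ generated by $X$ equals $X^{3m-1}$.
   Context: A finitely additive left-invariant mean is a positive linear functional $\int\cdot\,d\mu$ on $\ell^\infty(G)$ with $\int1_G\,d\mu=1$ and $\int f(g^{-1}\cdot)\,d\mu=\int f\,d\mu$; $\mu(X)=\int1_X\,d\mu$. $X^k$ is the set of products of $k$ elements of $X$. *)

From Stdlib Require Import Reals ClassicalEpsilon.
Open Scope R_scope.

Record Group : Type := MkGroup {
  carrier :> Type;
  gmul : carrier -> carrier -> carrier;
  gone : carrier;
  ginv : carrier -> carrier;
  gmulA : forall x y z, gmul x (gmul y z) = gmul (gmul x y) z;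
  gmul1l : forall x, gmul gone x = x;
  gmul1r : forall x, gmul x gone = x;
  gmulVl : forall x, gmul (ginv x) x = gone;
  gmulVr : forall x, gmul x (ginv x) = gone
}.

Definition bounded {G : Group} (f : G -> R) : Prop :=
  exists M : R, forall g, Rabs (f g) <= M.

(* Values on unbounded functions are irrelevant. *)
Definition left_invariant_mean (G : Group) (mu : (G -> R) -> R) : Prop :=
  (forall f h, bounded f -> bounded h ->
      mu (fun x => f x + h x) = mu f + mu h) /\
  (forall (c : R) f, bounded f -> mu (fun x => c * f x) = c * mu f) /\
  (forall f, bounded f -> (forall x, 0 <= f x) -> 0 <= mu f) /\
  mu (fun _ => 1) = 1 /\
  (forall f (g : G), bounded f ->
      mu (fun x => f (gmul G (ginv G g) x)) = mu f).

Definition indicator {G : Group} (X : G -> Prop) : G -> R :=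
  fun x => if excluded_middle_informative (X x) then 1 else 0.

Definition measure_of {G : Group} (mu : (G -> R) -> R) (X : G -> Prop) : R :=
  mu (indicator X).

Fixpoint prodset {G : Group} (X : G -> Prop) (k : nat) : G -> Prop :=
  match k with
  | O => fun g => g = gone G
  | S k' => fun g => exists x y, prodset X k' x /\ X y /\ g = gmul G x y
  end.

Definition subgroup {G : Group} (H : G -> Prop) : Prop :=
  H (gone G) /\ (forall x y, H x -> H y -> H (gmul G x y)) /\
  (forall x, H x -> H (ginv G x)).

Definition generated {G : Group} (X : G -> Prop) : G -> Prop :=
  fun g => forall H : G -> Prop, subgroup H -> (forall x, X x -> H x) -> H g.

From Pilot Require Import Defs.
From Stdlib Require Import Reals ClassicalEpsilon Classical Lia Lra.
Open Scope R_scope.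

(* If X^(N+1) = X^N then X^N is a subgroup, hence equals <X>.  Otherwise every
   X^(n+1) \ X^n with n <= N is nonempty.  For g in X^(3k+3) \ X^(3k+2) the
   translate gX lies in X^(3k+4) but misses X^(3k+1), since gx in X^(3k+1)
   would give g in X^(3k+1) X^-1.  Starting from X and adding such translates
   for k = 0, ..., m-1 yields m+1 pairwise disjoint translates of X, so
   (m+1) mu(X) <= 1, contradicting mu(X) >= 1/m when N = 3m-1. *)

Section GroupFacts.
Variable G : Group.

Lemma ginv_unique (a b : G) : gmul G a b = gone G -> b = ginv G a.
Proof.
  intro Hab. rewrite <- (gmul1l G b), <- (gmulVl G a), <- gmulA, Hab.
  apply gmul1r.
Qed.

Lemma ginvK (x : G) : ginv G (ginv G x) = x.
Proof. symmetry. apply ginv_unique, gmulVl. Qed.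

Lemma ginvM (x y : G) : ginv G (gmul G x y) = gmul G (ginv G y) (ginv G x).
Proof.
  symmetry. apply ginv_unique.
  rewrite <- gmulA, (gmulA G y), gmulVr, gmul1l. apply gmulVr.
Qed.

Lemma ginv1 : ginv G (gone G) = gone G.
Proof. rewrite <- (gmul1l G (ginv G (gone G))). apply gmulVr. Qed.

Lemma gmulKV (g x : G) : gmul G g (gmul G (ginv G g) x) = x.
Proof. rewrite gmulA, gmulVr. apply gmul1l. Qed.

Lemma gmul_ginv_translate (g x : G) :
  gmul G x (ginv G (gmul G (ginv G g) x)) = g.
Proof. rewrite ginvM, ginvK, gmulA, gmulVr. apply gmul1l. Qed.

Lemma indicator_in (A : G -> Prop) x : A x -> indicator A x = 1.
Proof. intro Hx. unfold indicator. now destruct excluded_middle_informative. Qed.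

Lemma indicator_notin (A : G -> Prop) x : ~ A x -> indicator A x = 0.
Proof. intro Hx. unfold indicator. now destruct excluded_middle_informative. Qed.

Lemma indicator_unit (A : G -> Prop) x : 0 <= indicator A x <= 1.
Proof. unfold indicator. destruct excluded_middle_informative; lra. Qed.

Lemma indicator_le (A B : G -> Prop) x :
  (forall y, A y -> B y) -> indicator A x <= indicator B x.
Proof.
  intro AB. destruct (classic (A x)) as [Ax | nAx].
  - rewrite !indicator_in; auto. lra.
  - rewrite indicator_notin by exact nAx. apply indicator_unit.
Qed.

Definition sub_indicator (A : G -> Prop) (F : G -> R) : Prop :=
  forall x, 0 <= F x <= indicator A x.

Section ProductSets.
Variable X : G -> Prop.

Lemma prodsetS n y z : prodset X n y -> X z -> prodset X (S n) (gmul G y z).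
Proof. intros Hy Hz. now exists y, z. Qed.

Lemma prodset1 x : X x -> prodset X 1 x.
Proof. intro Hx. rewrite <- (gmul1l G x). now apply prodsetS. Qed.

Lemma prodset_mul a b x y :
  prodset X a x -> prodset X b y -> prodset X (a + b) (gmul G x y).
Proof.
  revert y. induction b as [|b IH]; intros y Hx Hy.
  - simpl in Hy. subst y. now rewrite gmul1r, Nat.add_0_r.
  - destruct Hy as [y' [z [Hy' [Hz ->]]]].
    rewrite Nat.add_succ_r, gmulA. apply prodsetS; auto.
Qed.

Lemma prodset_generated n g : prodset X n g -> generated X g.
Proof.
  intros Hg H [H1 [HM _]] XH. revert g Hg.
  induction n as [|n IH]; intros g Hg.
  - simpl in Hg. now subst g.
  - destruct Hg as [y [z [Hy [Hz ->]]]]. auto.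
Qed.

Lemma translate_prodset n g x :
  prodset X n g -> X (gmul G (ginv G g) x) -> prodset X (S n) x.
Proof. intros Hg Hx. rewrite <- (gmulKV g x). now apply prodsetS. Qed.

Hypothesis X1 : X (gone G).

Lemma prodset_mono a b x : (a <= b)%nat -> prodset X a x -> prodset X b x.
Proof.
  induction 1 as [|b _ IH]; intro Hx; auto.
  rewrite <- (gmul1r G x). apply prodsetS; auto.
Qed.

Hypothesis Xsym : forall x, X x -> X (ginv G x).

Lemma prodset_inv n x : prodset X n x -> prodset X n (ginv G x).
Proof.
  revert x. induction n as [|n IH]; intros x Hx.
  - simpl in *. subst x. apply ginv1.
  - destruct Hx as [y [z [Hy [Hz ->]]]]. rewrite ginvM.
    apply (prodset_mul 1 n); auto using prodset1.
Qed.

Lemma translate_disjoint n g x :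
  ~ prodset X (S n) g -> X (gmul G (ginv G g) x) -> ~ prodset X n x.
Proof.
  intros Hg Hx Hxn. apply Hg. rewrite <- (gmul_ginv_translate g x).
  apply prodsetS; auto.
Qed.

Lemma sub_indicator_add_translate n F g :
  sub_indicator (prodset X n) F ->
  prodset X (S (S n)) g -> ~ prodset X (S n) g ->
  sub_indicator (prodset X (S (S (S n))))
    (fun x => F x + indicator X (gmul G (ginv G g) x)).
Proof.
  intros HF Hg Hng x. specialize (HF x).
  destruct (classic (X (gmul G (ginv G g) x))) as [Hx | Hx].
  - assert (F x = 0).
    { rewrite (indicator_notin _ x (translate_disjoint _ _ _ Hng Hx)) in HF. lra. }
    rewrite !indicator_in; [lra | | exact Hx].
    now apply (translate_prodset (S (S n)) g).
  - rewrite indicator_notin by exact Hx.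
    assert (indicator (prodset X n) x <= indicator (prodset X (S (S (S n)))) x).
    { apply indicator_le. intro y. apply prodset_mono. lia. }
    lra.
Qed.

Definition saturated n : Prop := forall x, prodset X (S n) x -> prodset X n x.

Lemma saturated_absorb n k x :
  saturated n -> prodset X (n + k) x -> prodset X n x.
Proof.
  intro Hsat. revert x. induction k as [|k IH]; intros x Hx.
  - now rewrite Nat.add_0_r in Hx.
  - rewrite Nat.add_succ_r in Hx. destruct Hx as [y [z [Hy [Hz ->]]]].
    apply Hsat, prodsetS; auto.
Qed.

Lemma saturated_subgroup n : saturated n -> subgroup (prodset X n).
Proof.
  intro Hsat. split; [|split].
  - apply (prodset_mono 0); [lia | reflexivity].
  - intros x y Hx Hy. apply (saturated_absorb n n); auto. now apply prodset_mul.
  - apply prodset_inv.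
Qed.

Lemma generated_prodset n g :
  (1 <= n)%nat -> saturated n -> generated X g -> prodset X n g.
Proof.
  intros Hn Hsat Hg. apply Hg; [now apply saturated_subgroup |].
  intros x Hx. apply (prodset_mono 1); auto using prodset1.
Qed.

Lemma unsaturated_witness N n :
  ~ saturated N -> (n <= N)%nat ->
  exists g, prodset X (S n) g /\ ~ prodset X n g.
Proof.
  intros HN Hn. apply NNPP. intro Hno. apply HN. intros x Hx.
  assert (Hsat : saturated n).
  { intros y Hy. apply NNPP. intro Hny. apply Hno. now exists y. }
  apply (prodset_mono n); [exact Hn |].
  apply (saturated_absorb n (S N - n)); [exact Hsat |].
  now replace (n + (S N - n))%nat with (S N) by lia.
Qed.

End ProductSets.

Section Mean.
Variable mu : (G -> R) -> R.
Hypothesis Hmu : left_invariant_mean G mu.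

Lemma bounded_unit (F : G -> R) : (forall x, -1 <= F x <= 1) -> Defs.bounded F.
Proof. intro HF. exists 1. intro x. now apply Rabs_le. Qed.

Lemma mean_le1 A F : sub_indicator A F -> mu F <= 1.
Proof.
  destruct Hmu as [HD [HZ [Hge0 [H1 _]]]]. intro HF.
  assert (HFunit : forall x, 0 <= F x <= 1).
  { intro x. specialize (HF x). pose proof (indicator_unit A x). lra. }
  assert (Hc : 0 <= mu (fun x => 1 + (-1) * F x)).
  { apply Hge0; [apply bounded_unit |]; intro x; specialize (HFunit x); lra. }
  rewrite HD, HZ, H1 in Hc; try lra;
    apply bounded_unit; intro x; specialize (HFunit x); lra.
Qed.

Lemma mean_translate_indicator (A : G -> Prop) g :
  mu (fun x => indicator A (gmul G (ginv G g) x)) = measure_of mu A.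
Proof.
  destruct Hmu as [_ [_ [_ [_ Htr]]]]. apply Htr.
  apply bounded_unit. intro x. pose proof (indicator_unit A x). lra.
Qed.

Variable X : G -> Prop.
Hypothesis X1 : X (gone G).
Hypothesis Xsym : forall x, X x -> X (ginv G x).

Lemma disjoint_translates K :
  (forall k, (k < K)%nat ->
     exists g, prodset X (S (3 * k + 2)) g /\ ~ prodset X (3 * k + 2) g) ->
  exists F, sub_indicator (prodset X (3 * K + 1)) F /\
            mu F = INR (S K) * measure_of mu X.
Proof.
  destruct Hmu as [HD _].
  induction K as [|K IH]; intro Hwit.
  - exists (indicator X). split.
    + intro x. split; [apply indicator_unit |].
      apply indicator_le, prodset1.
    + unfold measure_of. simpl. lra.
  - destruct IH as [F [HF HmuF]]; [intros k Hk; apply Hwit; lia |].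
    destruct (Hwit K (Nat.lt_succ_diag_r K)) as [g [Hg Hng]].
    replace (3 * K + 2)%nat with (S (3 * K + 1)) in Hg, Hng by lia.
    exists (fun x => F x + indicator X (gmul G (ginv G g) x)). split.
    + replace (3 * S K + 1)%nat with (S (S (S (3 * K + 1)))) by lia.
      now apply sub_indicator_add_translate.
    + assert (HFunit : forall x, -1 <= F x <= 1).
      { intro x. specialize (HF x). pose proof (indicator_unit (prodset X (3 * K + 1)) x).
        lra. }
      rewrite HD, HmuF, mean_translate_indicator, (S_INR (S K)); [lra | |];
        apply bounded_unit; auto.
      intro x. pose proof (indicator_unit X (gmul G (ginv G g) x)). lra.
Qed.

Lemma disjoint_translates_bound K :
  (forall k, (k < K)%nat ->
     exists g, prodset X (S (3 * k + 2)) g /\ ~ prodset X (3 * k + 2) g) ->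
  INR (S K) * measure_of mu X <= 1.
Proof.
  intro Hwit. destruct (disjoint_translates K Hwit) as [F [HF <-]].
  exact (mean_le1 _ _ HF).
Qed.

End Mean.
End GroupFacts.

Theorem lemma5p4 (G : Group) (mu : (G -> R) -> R)
  (Hmu : left_invariant_mean G mu)
  (X : G -> Prop)
  (Xsym : forall x, X x -> X (ginv G x))
  (X1 : X (gone G))
  (m : nat) (Hm : (1 <= m)%nat)
  (HX : measure_of mu X >= / INR m) :
  forall g : G, generated X g <-> prodset X (3 * m - 1) g.
Proof.
  assert (Hsat : saturated G X (3 * m - 1)).
  { apply NNPP. intro Hunsat.
    assert (Hbound : INR (S m) * measure_of mu X <= 1).
    { apply (disjoint_translates_bound G mu Hmu X X1 Xsym).
      intros k Hk. apply (unsaturated_witness G X X1 (3 * m - 1)); auto. lia. }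
    assert (Hm1 : 1 <= INR m) by (apply (le_INR 1); exact Hm).
    assert (HmX : 1 <= INR m * measure_of mu X).
    { rewrite <- (Rinv_r (INR m)) by lra. apply Rmult_le_compat_l; lra. }
    assert (0 < / INR m) by (apply Rinv_0_lt_compat; lra).
    rewrite S_INR in Hbound. nra. }
  intro g. split.
  - apply generated_prodset; auto. lia.
  - apply prodset_generated.
Qed.
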